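(* Let $T$ be the closed isosceles trapezoid in the Euclidean plane whose parallel sides have lengths $1100$ and $1000$ and whose two legs each have length $600$. Then there exist $510$ closed rectangles, each of size $40\times 30$, all contained in $T$ and with pairwise disjoint interiors.
   Context: Rectangles may be placed at any position and with any orientation in the plane (they need not be axis-parallel). This is the paper's packing solution to Alcuin's quadrangular city problem (a city with sides $1100$, $1000$, $600$, $600$ feet, houses $40\times 30$ feet), interpreting the city as an isosceles trapezium. *)

From Stdlib Require Import Reals Lra Lia.
Open Scope R_scope.

(* Height of the isosceles trapezium with parallel sides 1100, 1000 and
   legs 600: each leg projects horizontally onto (1100-1000)/2 = 50. *)
Definition trap_h : R := sqrt (600 ^ 2 - 50 ^ 2).

(* The closed isosceles trapezium with vertices
   (0,0), (1100,0), (1050,h), (50,h): intersection of the four closed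
   half-planes bounded by its side lines. *)
Definition in_trapezoid (x y : R) : Prop :=
  0 <= y /\ y <= trap_h /\
  50 * y <= trap_h * x /\ trap_h * x <= trap_h * 1100 - 50 * y.

(* The closed rectangle with corner (px,py), first side of length a in the
   unit direction (ux,uy) and second side of length b in the perpendicular
   direction (-uy,ux). *)
Definition in_rect (a b px py ux uy x y : R) : Prop :=
  exists s t, 0 <= s <= a /\ 0 <= t <= b /\
    x = px + s * ux - t * uy /\ y = py + s * uy + t * ux.

Definition in_rect_int (a b px py ux uy x y : R) : Prop :=
  exists s t, 0 < s < a /\ 0 < t < b /\
    x = px + s * ux - t * uy /\ y = py + s * uy + t * ux.

From Stdlib Require Import Reals Lra ZArith List Bool Lia.
Open Scope R_scope.

(* The houses are laid out axis-parallel, with integer corners, in 17 horizontal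
   rows of total height 590 < trap_h ~ 597.9. A row at heights [y, y + k] fits
   as soon as its left end is at least 50 (y + k) / trap_h from the left leg and
   likewise on the right; the legs have slope trap_h / 50 > 5979 / 500, so this
   reduces to integer inequalities, which are checked by computation together
   with the pairwise separation of the 510 houses. *)

Lemma trap_h_ge : 5979 / 10 <= trap_h.
Proof.
  unfold trap_h; rewrite <- (sqrt_square (5979 / 10)) by lra.
  apply sqrt_le_1_alt; lra.
Qed.

Lemma in_trapezoid_of_box (x0 x1 y0 y1 x y : R) :
  0 <= y0 -> y1 <= trap_h ->
  50 * y1 <= trap_h * x0 -> trap_h * x1 <= trap_h * 1100 - 50 * y1 ->
  x0 <= x <= x1 -> y0 <= y <= y1 -> in_trapezoid x y.
Proof.
  intros Hy0 Hy1 Hleft Hright Hx Hy.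
  pose proof trap_h_ge as Hh.
  assert (trap_h * x0 <= trap_h * x) by (apply Rmult_le_compat_l; lra).
  assert (trap_h * x <= trap_h * x1) by (apply Rmult_le_compat_l; lra).
  unfold in_trapezoid; lra.
Qed.

Definition pairwiseb {A : Type} (r : A -> A -> bool) : list A -> bool :=
  fix go l := match l with
              | nil => true
              | a :: l' => forallb (r a) l' && go l'
              end.

Lemma pairwiseb_nth {A : Type} (r : A -> A -> bool) (l : list A) (d : A) (i j : nat) :
  pairwiseb r l = true -> (i < j < length l)%nat ->
  r (nth i l d) (nth j l d) = true.
Proof.
  revert i j; induction l as [|a l IH]; simpl; intros i j Hl Hij; [lia|].
  apply andb_true_iff in Hl as [Ha Hl].
  destruct i as [|i], j as [|j]; try lia.
  - rewrite forallb_forall in Ha; apply Ha, nth_In; lia.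
  - apply IH; auto; lia.
Qed.

Record house := House { house_x : Z; house_y : Z; landscape : bool }.

Definition width (o : bool) : Z := if o then 40%Z else 30%Z.
Definition height (o : bool) : Z := if o then 30%Z else 40%Z.

(* A portrait house is the 40 x 30 rectangle based at its lower right corner,
   with first side pointing up. *)
Definition corner_x (b : house) : R :=
  IZR (house_x b) + if landscape b then 0 else 30.
Definition corner_y (b : house) : R := IZR (house_y b).
Definition dir_x (b : house) : R := if landscape b then 1 else 0.
Definition dir_y (b : house) : R := if landscape b then 0 else 1.

Definition house_rect (b : house) : R -> R -> Prop :=
  in_rect 40 30 (corner_x b) (corner_y b) (dir_x b) (dir_y b).
Definition house_rect_int (b : house) : R -> R -> Prop :=
  in_rect_int 40 30 (corner_x b) (corner_y b) (dir_x b) (dir_y b).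

Lemma house_rect_bounds (b : house) (x y : R) : house_rect b x y ->
  IZR (house_x b) <= x <= IZR (house_x b + width (landscape b)) /\
  IZR (house_y b) <= y <= IZR (house_y b + height (landscape b)).
Proof.
  intros (s & t & Hs & Ht & -> & ->); rewrite !plus_IZR.
  destruct b as [x0 y0 []]; unfold corner_x, corner_y, dir_x, dir_y; simpl; lra.
Qed.

Lemma house_rect_int_bounds (b : house) (x y : R) : house_rect_int b x y ->
  IZR (house_x b) < x < IZR (house_x b + width (landscape b)) /\
  IZR (house_y b) < y < IZR (house_y b + height (landscape b)).
Proof.
  intros (s & t & Hs & Ht & -> & ->); rewrite !plus_IZR.
  destruct b as [x0 y0 []]; unfold corner_x, corner_y, dir_x, dir_y; simpl; lra.
Qed.

Definition fits (b : house) : bool :=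
  let top := (house_y b + height (landscape b))%Z in
  (0 <=? house_y b)%Z && (top <=? 590)%Z &&
  (500 * top <=? 5979 * house_x b)%Z &&
  (500 * top <=? 5979 * (1100 - (house_x b + width (landscape b))))%Z.

Definition apart (b c : house) : bool :=
  (house_x b + width (landscape b) <=? house_x c)%Z ||
  (house_x c + width (landscape c) <=? house_x b)%Z ||
  (house_y b + height (landscape b) <=? house_y c)%Z ||
  (house_y c + height (landscape c) <=? house_y b)%Z.

Lemma IZR_leb (m n : Z) : (m <=? n)%Z = true -> IZR m <= IZR n.
Proof. intros H; apply IZR_le, Z.leb_le, H. Qed.

Lemma fits_in_trapezoid (b : house) (x y : R) :
  fits b = true -> house_rect b x y -> in_trapezoid x y.
Proof.
  unfold fits; intros Hfit Hxy.
  apply house_rect_bounds in Hxy; rewrite !plus_IZR in Hxy.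
  apply andb_true_iff in Hfit as [Hfit Hright].
  apply andb_true_iff in Hfit as [Hfit Hleft].
  apply andb_true_iff in Hfit as [Hbot Htop].
  apply IZR_leb in Hbot, Htop, Hleft, Hright.
  rewrite plus_IZR in Htop; rewrite !mult_IZR, plus_IZR in Hleft;
  rewrite !mult_IZR, minus_IZR, !plus_IZR in Hright.
  set (x0 := IZR (house_x b)) in *; set (w := IZR (width (landscape b))) in *.
  set (top := IZR (house_y b) + IZR (height (landscape b))) in *.
  pose proof trap_h_ge as Hh.
  assert (Hw : 0 <= w) by (unfold w; destruct (landscape b); simpl; lra).
  assert (Htop0 : 0 <= top)
    by (unfold top; destruct (landscape b); simpl; lra).
  apply (in_trapezoid_of_box x0 (x0 + w) (IZR (house_y b)) top); try lra.
  - assert (5979 / 10 * x0 <= trap_h * x0)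
      by (apply Rmult_le_compat_r; lra).
    lra.
  - assert (5979 / 10 * (1100 - (x0 + w)) <= trap_h * (1100 - (x0 + w)))
      by (apply Rmult_le_compat_r; lra).
    lra.
Qed.

Lemma apart_disjoint (b c : house) (x y : R) :
  apart b c = true -> ~ (house_rect_int b x y /\ house_rect_int c x y).
Proof.
  unfold apart; intros Hsep [Hb Hc].
  apply house_rect_int_bounds in Hb; apply house_rect_int_bounds in Hc.
  rewrite !plus_IZR in Hb, Hc.
  repeat (apply orb_true_iff in Hsep as [Hsep|Hsep]);
    apply IZR_leb in Hsep; rewrite plus_IZR in Hsep; lra.
Qed.

(* A row: orientation of its houses, number of houses, abscissa of its left end. *)
Definition row := (bool * nat * Z)%type.

Fixpoint stack (y : Z) (rows : list row) : list house :=
  match rows with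
  | nil => nil
  | (o, n, a) :: rows' =>
      map (fun k => House (a + Z.of_nat k * width o) y o) (seq 0 n)
        ++ stack (y + height o) rows'
  end.

Definition layout : list house :=
  stack 0 (repeat (true, 27%nat, 10%Z) 3 ++ repeat (false, 35%nat, 25%Z) 5 ++
           repeat (true, 26%nat, 30%Z) 2 ++ repeat (false, 34%nat, 40%Z) 3 ++
           repeat (true, 25%nat, 50%Z) 4).

Lemma layout_length : length layout = 510%nat.
Proof. reflexivity. Qed.

Lemma layout_fits : forallb fits layout = true.
Proof. vm_compute; reflexivity. Qed.

Lemma layout_apart : pairwiseb apart layout = true.
Proof. vm_compute; reflexivity. Qed.

Definition house_at (i : nat) : house := nth i layout (House 0 0 true).

Lemma house_at_fits (i : nat) : (i < 510)%nat -> fits (house_at i) = true.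
Proof.
  intros Hi; pose proof layout_fits as H; rewrite forallb_forall in H.
  apply H, nth_In; rewrite layout_length; exact Hi.
Qed.

Lemma house_at_apart (i j : nat) :
  (i < j < 510)%nat -> apart (house_at i) (house_at j) = true.
Proof.
  intros Hij; apply pairwiseb_nth; [exact layout_apart|].
  rewrite layout_length; exact Hij.
Qed.

Theorem mainTheorem1 :
  exists px py ux uy : nat -> R,
    (forall i, (i < 510)%nat ->
       ux i ^ 2 + uy i ^ 2 = 1 /\
       (forall x y, in_rect 40 30 (px i) (py i) (ux i) (uy i) x y ->
                    in_trapezoid x y)) /\
    (forall i j, (i < 510)%nat -> (j < 510)%nat -> i <> j ->
       forall x y,
         ~ (in_rect_int 40 30 (px i) (py i) (ux i) (uy i) x y /\
            in_rect_int 40 30 (px j) (py j) (ux j) (uy j) x y)).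
Proof.
  exists (fun i => corner_x (house_at i)), (fun i => corner_y (house_at i)),
         (fun i => dir_x (house_at i)), (fun i => dir_y (house_at i)).
  split.
  - intros i Hi; split.
    + unfold dir_x, dir_y; destruct (landscape (house_at i)); lra.
    + intros x y; apply fits_in_trapezoid, house_at_fits, Hi.
  - intros i j Hi Hj Hij x y.
    destruct (Nat.lt_gt_cases i j) as [[Hlt|Hgt] _]; [exact Hij| |].
    + apply apart_disjoint, house_at_apart; lia.
    + intros [Hxi Hxj]; apply (apart_disjoint (house_at j) (house_at i) x y).
      * apply house_at_apart; lia.
      * split; assumption.
Qed.
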